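(* Let $\mathbf{V} \in \mathbb{R}^{n \times d}$ with rows $\mathbf{v}_1, \dots, \mathbf{v}_n \in \mathbb{R}^{d}$, and let $\mathbf{A} = \mathbf{V}\mathbf{V}^T$, so $A_{ij} = \mathbf{v}_i^T \mathbf{v}_j$. Consider the correlation clustering problem for $\mathbf{A}$: maximize $$\sum_{1 \le i<j \le n} A_{ij}\, \mathbf{x}_i^T \mathbf{x}_j$$ over all choices $\mathbf{x}_i \in \{\mathbf{e}_1, \dots, \mathbf{e}_n\}$ ($i=1,\dots,n$), where $\mathbf{e}_k$ is the $k$-th standard basis vector of $\mathbb{R}^n$ (equivalently, over all partitions of $\{1,\dots,n\}$ into clusters, where $\mathbf{x}_i$ indicates the cluster of $i$, maximize the sum of $A_{ij}$ over pairs $i<j$ in the same cluster). Then this problem can be solved by partitioning the row vectors $\mathbf{v}_1,\dots,\mathbf{v}_n$ into $d+1$ clusters $C_1, \dots, C_{d+1}$ (some possibly empty) so as to maximize $$\sum_{i=1}^{d+1} \|S_i\|_2^2, \qquad S_i = \sum_{\mathbf{v} \in C_i} \mathbf{v}.$$ That is, the maximum of this quantity over partitions into $d+1$ (possibly empty) clusters is attained, and any partition attaining it (with empty clusters discarded) is an optimal solution of the correlation clustering problem for $\mathbf{A}$.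
   Context: The vector $S_i$ is called the sum point of cluster $C_i$; the sum point of an empty cluster is the zero vector. Clusters are formed from the indices $1,\dots,n$ (equivalently, from the row vectors with multiplicity). *)

From mathcomp Require Import all_boot all_order all_algebra.
Set Implicit Arguments. Unset Strict Implicit. Unset Printing Implicit Defensive.
Import Order.TTheory GRing.Theory Num.Theory.
Local Open Scope ring_scope.

Definition gram (R : realFieldType) (n d : nat) (V : 'M[R]_(n, d)) : 'M[R]_n :=
  V *m V^T.

(* Correlation-clustering objective for a cluster assignment x : 'I_n -> T
   (x_i^T x_j = 1 iff i and j get the same basis vector / label, else 0):
   sum over i < j of A_ij [x i = x j]. *)
Definition cc_value (R : realFieldType) (n : nat) (A : 'M[R]_n)
    (T : eqType) (x : 'I_n -> T) : R :=
  \sum_(i < n) \sum_(j < n | (i < j)%N) A i j * (x i == x j)%:R.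

Definition sum_point (R : realFieldType) (n d k : nat) (V : 'M[R]_(n, d))
    (c : 'I_n -> 'I_k) (l : 'I_k) : 'rV[R]_d :=
  \sum_(i < n | c i == l) row i V.

Definition sqnorm (R : realFieldType) (d : nat) (s : 'rV[R]_d) : R :=
  \sum_(k < d) s 0 k ^+ 2.

Definition sumpoint_value (R : realFieldType) (n d : nat) (V : 'M[R]_(n, d))
    (c : 'I_n -> 'I_d.+1) : R :=
  \sum_(l < d.+1) sqnorm (sum_point V c l).

(** Counting [A i j] over all ordered pairs in a common cluster, diagonal
    included, gives twice the objective plus [\tr A]; for [A = V V^T] this
    count is [\sum_l |S_l|^2].  Merging clusters [a] and [b] adds
    [2 <S_a, S_b>] to it, so merging two clusters whose sum points make a
    non-obtuse angle never hurts.  Pairwise strictly obtuse vectors of [R^d]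
    number at most [d + 1]: all but one of them are linearly independent,
    since a dependency splits into two equal nonnegative combinations whose
    inner product is [<= 0], so both vanish, which the remaining vector
    (obtuse to all the others) forbids.  Hence every clustering merges down
    to [d + 1] clusters without loss. *)

From mathcomp Require Import all_boot all_order all_algebra.
From mathcomp Require Import lra.
Import Order.TTheory GRing.Theory Num.Theory.
Local Open Scope ring_scope.
Set Implicit Arguments. Unset Strict Implicit. Unset Printing Implicit Defensive.

Section RowDot.
Variables (R : comPzRingType) (d : nat).
Implicit Types u v : 'rV[R]_d.

Definition rvdot u v : R := (u *m v^T) 0 0.

Lemma rvdotE u v : rvdot u v = \sum_k u 0 k * v 0 k.
Proof. by rewrite /rvdot mxE; apply: eq_bigr => k _; rewrite mxE. Qed.

Lemma rvdotC u v : rvdot u v = rvdot v u.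
Proof. by rewrite !rvdotE; apply: eq_bigr => k _; rewrite mulrC. Qed.

Lemma rvdot_suml (I : Type) (r : seq I) (P : pred I) (F : I -> 'rV_d) v :
  rvdot (\sum_(i <- r | P i) F i) v = \sum_(i <- r | P i) rvdot (F i) v.
Proof. by rewrite /rvdot mulmx_suml summxE. Qed.

Lemma rvdot_sumr (I : Type) (r : seq I) (P : pred I) (F : I -> 'rV_d) v :
  rvdot v (\sum_(i <- r | P i) F i) = \sum_(i <- r | P i) rvdot v (F i).
Proof. by rewrite rvdotC rvdot_suml; apply: eq_bigr => i _; rewrite rvdotC. Qed.

Lemma rvdotZl a u v : rvdot (a *: u) v = a * rvdot u v.
Proof. by rewrite /rvdot -scalemxAl mxE. Qed.

Lemma rvdotZr a u v : rvdot u (a *: v) = a * rvdot u v.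
Proof. by rewrite rvdotC rvdotZl rvdotC. Qed.

Lemma rvdot0l v : rvdot 0 v = 0.
Proof. by rewrite /rvdot mul0mx mxE. Qed.

End RowDot.

Section ObtuseFamilies.
Variables (R : realFieldType) (d : nat).
Implicit Types u z : 'rV[R]_d.

Lemma rvdot_sqnorm u : rvdot u u = sqnorm u.
Proof. by rewrite rvdotE; apply: eq_bigr => k _; rewrite expr2. Qed.

Lemma sqnorm_le0 u : sqnorm u <= 0 -> u = 0.
Proof.
move=> u_le0; have sq_ge0 k : true -> 0 <= u 0 k ^+ 2 by rewrite sqr_ge0.
have u0 : sqnorm u = 0 by apply/eqP; rewrite eq_le u_le0 sumr_ge0.
apply/rowP => k; apply/eqP; rewrite mxE -sqrf_eq0.
exact/eqP/(psumr_eq0P sq_ge0 u0).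
Qed.

Lemma nonneg_combination_eq0 (I : finType) (w : I -> 'rV[R]_d) z (p : I -> R) :
  (forall t, rvdot (w t) z < 0) -> (forall t, 0 <= p t) ->
  \sum_t p t *: w t = 0 -> forall t, p t = 0.
Proof.
move=> wz_lt0 p_ge0 comb0 t.
have terms_ge0 s : true -> 0 <= - (p s * rvdot (w s) z).
  by rewrite oppr_ge0 mulr_ge0_le0 // ltW.
have terms0 : \sum_s - (p s * rvdot (w s) z) = 0.
  rewrite sumrN; under eq_bigr do rewrite -rvdotZl.
  by rewrite -rvdot_suml comb0 rvdot0l oppr0.
have /eqP := psumr_eq0P terms_ge0 terms0 (i := t) isT.
by rewrite oppr_eq0 mulf_eq0 (lt_eqF (wz_lt0 t)) orbF => /eqP.
Qed.

Lemma obtuse_split_combination_eq0 (I : finType) (w : I -> 'rV[R]_d)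
    (p q : I -> R) :
  (forall s t, s != t -> rvdot (w s) (w t) < 0) ->
  (forall t, 0 <= p t) -> (forall t, 0 <= q t) -> (forall t, p t * q t = 0) ->
  \sum_t p t *: w t = \sum_t q t *: w t -> \sum_t p t *: w t = 0.
Proof.
move=> obtuse p_ge0 q_ge0 pq0 comb_eq; apply: sqnorm_le0.
rewrite -rvdot_sqnorm {2}comb_eq rvdot_suml sumr_le0 // => s _.
rewrite rvdotZl rvdot_sumr mulr_sumr sumr_le0 // => t _.
rewrite rvdotZr mulrA; have [<-|st] := eqVneq s t; first by rewrite pq0 mul0r.
by rewrite mulr_ge0_le0 ?mulr_ge0 // ltW // obtuse.
Qed.

Lemma obtuse_row_free k (w : 'I_k -> 'rV[R]_d) z :
  (forall s t, s != t -> rvdot (w s) (w t) < 0) ->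
  (forall t, rvdot (w t) z < 0) -> row_free (\matrix_t w t).
Proof.
move=> obtuse wz_lt0; rewrite -kermx_eq0; apply/eqP/row_matrixP => i.
rewrite row0; set u := row i _.
have u_dep : \sum_t u 0 t *: w t = 0.
  have : u *m \matrix_t w t = 0 by rewrite -row_mul mulmx_ker row0.
  by rewrite mulmx_sum_row; under eq_bigr do rewrite rowK.
have [p [q [p_ge0 q_ge0 pq0 uE]]] : exists p q : 'I_k -> R,
    [/\ forall t, 0 <= p t, forall t, 0 <= q t, forall t, p t * q t = 0
      & forall t, u 0 t = p t - q t].
  exists (fun t => Num.max (u 0 t) 0), (fun t => Num.max (- u 0 t) 0).
  split=> t; rewrite ?le_max ?lexx ?orbT //=;
    case: (leP 0 (u 0 t)) => [u_ge0|u_lt0].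
  - by rewrite (max_r (_ : - u 0 t <= 0)) ?mulr0 // oppr_le0.
  - by rewrite mul0r.
  - by rewrite (max_r (_ : - u 0 t <= 0)) ?subr0 // oppr_le0.
  - by rewrite max_l ?sub0r ?opprK // oppr_ge0 ltW.
have comb_eq : \sum_t p t *: w t = \sum_t q t *: w t.
  apply/eqP; rewrite -subr_eq0 -sumrB -[X in _ == X]u_dep; apply/eqP.
  by apply: eq_bigr => t _; rewrite -scalerBl uE.
have p_comb0 := obtuse_split_combination_eq0 obtuse p_ge0 q_ge0 pq0 comb_eq.
have q_comb0 : \sum_t q t *: w t = 0 by rewrite -comb_eq.
apply/rowP => t; rewrite [RHS]mxE uE.
by rewrite (nonneg_combination_eq0 wz_lt0 p_ge0 p_comb0)
  (nonneg_combination_eq0 wz_lt0 q_ge0 q_comb0) subr0.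
Qed.

Lemma obtuse_family_le k (w : 'I_k -> 'rV[R]_d) :
  (forall s t, s != t -> rvdot (w s) (w t) < 0) -> (k <= d.+1)%N.
Proof.
case: k w => // k w obtuse.
have widen_neq_max (t : 'I_k) : widen_ord (leqnSn k) t != ord_max.
  by rewrite -val_eqE /= neq_ltn ltn_ord.
have : row_free (\matrix_t w (widen_ord (leqnSn k) t)).
  apply: (@obtuse_row_free _ _ (w ord_max)) => [s t st|t]; last exact: obtuse (widen_neq_max t).
  by apply: obtuse; rewrite -val_eqE /= val_eqE.
by rewrite /row_free => /eqP <-; apply: rank_leq_col.
Qed.

Lemma exists_nonobtuse_pair (T : finType) (w : T -> 'rV[R]_d) (A : {set T}) :
  (d.+1 < #|A|)%N ->
  exists a b, [/\ a \in A, b \in A, a != b & 0 <= rvdot (w a) (w b)].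
Proof.
move=> A_big.
have [/existsP [a /existsP [b /and4P [aA bA ab ab_ge0]]]|no_pair] :=
  boolP [exists a, exists b, [&& a \in A, b \in A, a != b & 0 <= rvdot (w a) (w b)]].
  by exists a, b.
suff : (#|A| <= d.+1)%N by rewrite leqNgt A_big.
apply: (obtuse_family_le (w := fun i : 'I_#|A| => w (enum_val i))) => s t st.
rewrite ltNge; apply: contra no_pair => st_ge0; apply/existsP; exists (enum_val s).
apply/existsP; exists (enum_val t).
by rewrite !enum_valP (inj_eq enum_val_inj) st.
Qed.

End ObtuseFamilies.

Lemma relabel_assignment (aT T : finType) k (y : aT -> T) :
  (#|[set y i | i : aT]| <= k)%N ->
  exists c : aT -> 'I_k, forall i j, (c i == c j) = (y i == y j).
Proof.
set I := [set y i | i : aT] => card_le.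
have y_in i : y i \in enum I by rewrite mem_enum imset_f.
have index_lt i : (index (y i) (enum I) < k)%N.
  by apply: leq_trans card_le; rewrite cardE index_mem.
exists (fun i => Ordinal (index_lt i)) => i j.
rewrite -val_eqE /=; apply/eqP/eqP => [eq_ij|->] //.
by rewrite -(nth_index (y i) (y_in i)) -(nth_index (y i) (y_in j)) eq_ij.
Qed.

Lemma exists_max_assignment (R : realDomainType) (aT rT : finType)
    (F : (aT -> rT) -> R) (r0 : rT) :
  (forall f g, f =1 g -> F f = F g) -> exists f, forall g, F g <= F f.
Proof.
move=> F_ext.
have [f _ f_max] := @arg_maxP _ _ {ffun aT -> rT} [ffun=> r0] predT F isT.
exists f => g; rewrite (F_ext g [ffun i => g i]); first exact: f_max.
by move=> i; rewrite ffunE.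
Qed.

Section CorrelationClustering.
Variables (R : realFieldType) (n : nat).

Definition cc_full_value (A : 'M[R]_n) (T : eqType) (x : 'I_n -> T) : R :=
  \sum_i \sum_j A i j * (x i == x j)%:R.

Lemma eq_cc_full_value (A : 'M[R]_n) (T1 T2 : eqType)
    (x : 'I_n -> T1) (y : 'I_n -> T2) :
  (forall i j, (x i == x j) = (y i == y j)) ->
  cc_full_value A x = cc_full_value A y.
Proof. by move=> xy; apply: eq_bigr => i _; apply: eq_bigr => j _; rewrite xy. Qed.

Lemma cc_full_valueE (A : 'M[R]_n) (T : eqType) (x : 'I_n -> T) :
  A^T = A -> cc_full_value A x = 2 * cc_value A x + \tr A.
Proof.
move=> A_sym; pose F i j := A i j * (x i == x j)%:R.
have F_sym i j : F i j = F j i by rewrite /F -{1}A_sym mxE eq_sym.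
have row_split i : \sum_j F i j =
    \sum_(j < n | (i < j)%N) F i j + \sum_(j < n | (j < i)%N) F i j + A i i.
  rewrite (bigD1 i) //= [F i i]/F eqxx mulr1 addrC; congr (_ + _).
  rewrite big_mkcond [X in _ = X + _]big_mkcond [X in _ = _ + X]big_mkcond.
  rewrite -big_split; apply: eq_bigr => j _ /=.
  case: (ltngtP i j) => [ij|ji|/val_inj ->]; rewrite ?eqxx ?addr0 ?add0r //.
    by rewrite -val_eqE /= gtn_eqF.
  by rewrite -val_eqE /= ltn_eqF.
have lower_upper : \sum_(i < n) \sum_(j < n | (j < i)%N) F i j = cc_value A x.
  rewrite /cc_value (exchange_big_dep predT) //=; apply: eq_bigr => i _.
  by apply: eq_bigr => j _; rewrite F_sym.
rewrite /cc_full_value (eq_bigr _ (fun i _ => row_split i)) !big_split /=.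
rewrite lower_upper -/(cc_value A x) -/(mxtrace A); lra.
Qed.

End CorrelationClustering.

Section SumPoints.
Variables (R : realFieldType) (n d : nat) (V : 'M[R]_(n, d)).

Lemma gram_rvdot i j : gram V i j = rvdot (row i V) (row j V).
Proof. by rewrite /gram rvdotE mxE; apply: eq_bigr => k _; rewrite !mxE. Qed.

Lemma gram_sym : (gram V)^T = gram V.
Proof. by rewrite /gram trmx_mul trmxK. Qed.

Lemma rvdot_sum_point k (c : 'I_n -> 'I_k) a b :
  rvdot (sum_point V c a) (sum_point V c b) =
  \sum_i \sum_j gram V i j * ((c i == a)%:R * (c j == b)%:R).
Proof.
rewrite rvdot_suml big_mkcond /=; apply: eq_bigr => i _.
case: (c i == a); last by rewrite big1 // => j _; rewrite mul0r mulr0.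
rewrite rvdot_sumr big_mkcond /=; apply: eq_bigr => j _.
by case: (c j == b); rewrite ?mul1r ?mulr0 ?mulr1 ?gram_rvdot.
Qed.

Lemma cc_full_value_gram k (c : 'I_n -> 'I_k) :
  cc_full_value (gram V) c = \sum_l sqnorm (sum_point V c l).
Proof.
under [RHS]eq_bigr do rewrite -rvdot_sqnorm rvdot_sum_point.
rewrite exchange_big; apply: eq_bigr => i _; rewrite exchange_big.
apply: eq_bigr => j _; rewrite -mulr_sumr (bigD1 (c i)) //= eqxx mul1r.
rewrite big1 ?addr0 1?eq_sym // => l /negbTE neq_l.
by rewrite eq_sym neq_l mul0r.
Qed.

Lemma sumpoint_valueE (c : 'I_n -> 'I_d.+1) :
  sumpoint_value V c = cc_full_value (gram V) c.
Proof. by rewrite cc_full_value_gram. Qed.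

Definition merge_cluster k (c : 'I_n -> 'I_k) (b a : 'I_k) (i : 'I_n) : 'I_k :=
  if c i == b then a else c i.

Lemma cc_full_value_merge k (c : 'I_n -> 'I_k) a b : a != b ->
  cc_full_value (gram V) (merge_cluster c b a) =
  cc_full_value (gram V) c + 2 * rvdot (sum_point V c a) (sum_point V c b).
Proof.
move=> ab.
have same_merged i j : ((merge_cluster c b a i == merge_cluster c b a j)%:R : R)
    = (c i == c j)%:R + (c i == a)%:R * (c j == b)%:R
      + (c i == b)%:R * (c j == a)%:R.
  rewrite /merge_cluster; have ba : b != a by rewrite eq_sym.
  case: (eqVneq (c i) b) => [->|cib]; case: (eqVneq (c j) b) => [->|cjb];
    rewrite ?eqxx ?(negbTE ab) ?(negbTE ba) ?(negbTE cib) ?(negbTE cjb) /=;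
    by rewrite ?mul0r ?mulr0 ?mul1r ?mulr1 ?addr0 ?add0r ?[a == _]eq_sym.
rewrite mulr2n mulrDl mul1r {2}rvdotC !rvdot_sum_point /cc_full_value.
rewrite -!big_split; apply: eq_bigr => i _; rewrite -!big_split.
by apply: eq_bigr => j _; rewrite same_merged !mulrDr /= addrA.
Qed.

Lemma cc_full_value_reduce k (y : 'I_n -> 'I_k) :
  exists c : 'I_n -> 'I_d.+1, cc_full_value (gram V) y <= cc_full_value (gram V) c.
Proof.
have [m] := ubnP #|[set y i | i : 'I_n]|; elim: m y => // m IH y /ltnSE card_le.
have [le_card|gt_card] := leqP #|[set y i | i : 'I_n]| d.+1.
  have [c cE] := relabel_assignment le_card.
  by exists c; rewrite (eq_cc_full_value _ cE).
have [a [b [a_in b_in ab dot_ge0]]] := exists_nonobtuse_pair (sum_point V y) gt_card.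
have merged_sub : [set merge_cluster y b a i | i : 'I_n] \subset
    [set y i | i : 'I_n] :\ b.
  apply/subsetP => _ /imsetP [i _ ->]; rewrite /merge_cluster !inE.
  by have [_|yib] := eqVneq (y i) b; rewrite ?ab ?a_in ?yib ?imset_f.
have [|c le_c] := IH (merge_cluster y b a).
  apply: leq_ltn_trans (subset_leq_card merged_sub) _.
  by move: card_le; rewrite (cardsD1 b) b_in add1n.
exists c; apply: le_trans le_c.
by rewrite cc_full_value_merge // lerDl mulr_ge0.
Qed.

End SumPoints.

Theorem theorem1 (R : realFieldType) (n d : nat) (V : 'M[R]_(n, d)) :
  (exists c : 'I_n -> 'I_d.+1,
      forall c' : 'I_n -> 'I_d.+1, sumpoint_value V c' <= sumpoint_value V c)
  /\
  (forall c : 'I_n -> 'I_d.+1,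
      (forall c' : 'I_n -> 'I_d.+1, sumpoint_value V c' <= sumpoint_value V c) ->
      exists x : 'I_n -> 'I_n,
        (forall i j : 'I_n, (x i == x j) = (c i == c j)) /\
        (forall y : 'I_n -> 'I_n, cc_value (gram V) y <= cc_value (gram V) x)).
Proof.
split.
  apply: (exists_max_assignment ord0) => f g fg.
  by rewrite !sumpoint_valueE; apply: eq_cc_full_value => i j; rewrite !fg.
move=> c c_max.
have [x xE] : exists x : 'I_n -> 'I_n, forall i j, (x i == x j) = (c i == c j).
  exact: relabel_assignment (leq_trans (leq_imset_card _ _) (eq_leq (card_ord n))).
exists x; split=> // y.
have [c' le_yc'] := cc_full_value_reduce V y.
have : cc_full_value (gram V) y <= cc_full_value (gram V) x.
  rewrite (eq_cc_full_value _ xE) -sumpoint_valueE.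
  by apply: le_trans le_yc' _; rewrite -sumpoint_valueE.
by rewrite !cc_full_valueE ?gram_sym // lerD2r ler_pM2l.
Qed.
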